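(* Let $\varepsilon>0$, let $QR\in\mathcal{QR}_\varepsilon$ be a quasi-rectangle with pseudo-axial symmetry, let $E\in\mathcal C_\varepsilon$ and let $\mathcal R(E)\in\mathcal C_\varepsilon$ be the discrete Steiner-like rearrangement of $E$ with respect to $QR$. Then $$D_\varepsilon(E,QR)\ \ge\ D_\varepsilon(\mathcal R(E),QR).$$
   Context: For $\mathcal J\subset\varepsilon\mathbb Z^2$, $E_{\mathcal J}=\bigcup_{j\in\mathcal J}(j+\varepsilon[-\frac12,\frac12]^2)$ and $\mathcal C_\varepsilon=\{E_{\mathcal J}:\mathcal J\subset\varepsilon\mathbb Z^2\}$. Write $\mathcal J(\cdot,q)=\{\varepsilon(j_1,q)\in\mathcal J\}$, $\mathcal J(p,\cdot)=\{\varepsilon(p,j_2)\in\mathcal J\}$. Discrete distance: for $i\in\varepsilon\mathbb Z^2$, $d^\varepsilon_\infty(i,\partial\mathcal J)=\mathrm{dist}(i,\mathcal J)+\mathrm{dist}(i,\varepsilon\mathbb Z^2\setminus\mathcal J)$ with $\mathrm{dist}(i,\mathcal J)=\inf\{\|i-j\|_\infty:j\in\mathcal J\}$, extended to $x\in i+\varepsilon[-\frac12,\frac12]^2$ by $d^\varepsilon_\infty(x,\partial\mathcal J)=d^\varepsilon_\infty(i,\partial\mathcal J)$. For $E=E_{\mathcal J}$ and $F\in\mathcal C_\varepsilon$, $D_\varepsilon(F,E)=\int_{F\triangle E}d^\varepsilon_\infty(x,\partial\mathcal J)\,dx$. Quasi-rectangle: $E=E_{\mathcal J}\in\mathcal C_\varepsilon$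 with $\#\mathcal J=nm+r$, $n,m,r\in\mathbb N$, $r<n=\max\{n,m\}$, $E=R\cup Q$ with $R$ a rectangle of sides $\varepsilon n$ (horizontal) and $\varepsilon m$ (vertical), $Q$ a rectangle of sides $\varepsilon r$ (horizontal) and $\varepsilon$ (vertical), each lattice point of $Q$ at distance $\varepsilon$ from a lattice point of $R$; $\mathcal{QR}_\varepsilon$ is the set of these. Pseudo-axial symmetry: the center of $R$ is $(0,0)$, $(\frac\varepsilon2,0)$, $(0,\frac\varepsilon2)$, $(\frac\varepsilon2,\frac\varepsilon2)$ according to ($n,m$ odd), ($n$ even, $m$ odd), ($n$ odd, $m$ even), ($n,m$ even), and $Q=[-\varepsilon\frac r2,\varepsilon\frac r2]\times[L,L+\varepsilon]$ if $r$ odd, $Q=[-\varepsilon\frac r2+\frac\varepsilon2,\varepsilon\frac r2+\frac\varepsilon2]\times[L,L+\varepsilon]$ if $r$ even, with $L=\mathcal H^1(\Pi_2(R)\cap(\{0\}\times[0,\infty)))$. Rearrangement $\mathcal R(E)$ for $E=E_{\mathcal J}$: Step 1: for each $q$, with $N_q=\#\mathcal J(\cdot,q)$, replace row $q$ by $\mathcal J'(q)=\{\varepsilon(j,q):j\in\{-\frac{N_q-1}2,\dots,\frac{N_q-1}2\}\}$ if $N_q$ odd, $\{\varepsilon(j,q):j\in\{-\frac{N_q}2+1,\dots,\frac{N_q}2\}\}$ if $N_q$ even; $\mathcal J'=\bigcup_q\mathcal J'(q)$. Step 2: for each $p$, with $M_p=\#\mathcal J'(p,\cdot)$: if $m$ even,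 $\mathcal J''(p)=\{\varepsilon(p,j):j\in\{1-\frac{M_p-1}2,\dots,1+\frac{M_p-1}2\}\}$ if $M_p$ odd, $\{\varepsilon(p,j):j\in\{-\frac{M_p}2+1,\dots,\frac{M_p}2\}\}$ if $M_p$ even; if $m$ odd, $\mathcal J''(p)=\{\varepsilon(p,j):j\in\{-\frac{M_p-1}2,\dots,\frac{M_p-1}2\}\}$ if $M_p$ odd, $\{\varepsilon(p,j):j\in\{-\frac{M_p}2+1,\dots,\frac{M_p}2\}\}$ if $M_p$ even. $\mathcal R(E)=E_{\bigcup_p\mathcal J''(p)}$. *)

From HB Require Import structures.
From mathcomp Require Import all_boot all_order all_algebra.
From mathcomp Require Import finmap.
From mathcomp Require Import all_classical all_reals all_analysis.

Set Implicit Arguments.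
Unset Strict Implicit.
Unset Printing Implicit Defensive.

Import Order.TTheory GRing.Theory Num.Theory.
Import numFieldNormedType.Exports.

Local Open Scope classical_set_scope.
Local Open Scope ring_scope.

(* Lattice conventions.  An index k = (p, q) : int * int stands for the *)
(* lattice point eps * (p, q) of eps Z^2.  A finite index set           *)
(* J : {fset (int * int)} stands for the finite set \mathcal J.         *)

Section Lattice.
Variable R : realType.

Definition lpt (eps : R) (k : int * int) : R * R :=
  (eps * k.1%:~R, eps * k.2%:~R).

Definition normInf (x y : R * R) : R :=
  Num.max `|x.1 - y.1| `|x.2 - y.2|.

Definition cell (eps : R) (k : int * int) : set (R * R) :=
  [set x | `|x.1 - (lpt eps k).1| <= eps / 2 /\ `|x.2 - (lpt eps k).2| <= eps / 2].

Definition EJ (eps : R) (J : {fset (int * int)}) : set (R * R) :=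
  [set x | exists2 k, k \in J & cell eps k x].

Definition distJ (eps : R) (i : int * int) (J : {fset (int * int)}) : R :=
  inf [set normInf (lpt eps i) (lpt eps j) | j in [set j | j \in J]].

Definition distCJ (eps : R) (i : int * int) (J : {fset (int * int)}) : R :=
  inf [set normInf (lpt eps i) (lpt eps j) | j in [set j | j \notin J]].

Definition dlat (eps : R) (J : {fset (int * int)}) (i : int * int) : R :=
  distJ eps i J + distCJ eps i J.

(* index of a cell containing x (the nearest lattice point; on the
   measure-zero cell boundaries the choice is made by rounding up) *)
Definition cellidx (eps : R) (x : R * R) : int * int :=
  (Num.floor (x.1 / eps + 2^-1), Num.floor (x.2 / eps + 2^-1)).

Definition dext (eps : R) (J : {fset (int * int)}) (x : R * R) : R :=
  dlat eps J (cellidx eps x).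

Definition leb2 := ((@lebesgue_measure R) \x (@lebesgue_measure R))%E.

Definition Deps (eps : R) (K J : {fset (int * int)}) : \bar R :=
  (\int[leb2]_(x in (EJ eps K `\` EJ eps J) `|` (EJ eps J `\` EJ eps K))
      (dext eps J x)%:E)%E.

End Lattice.

Definition zrange (a b : int) : seq int :=
  if a <= b then mkseq (fun i : nat => a + i%:Z) (absz (b - a)).+1 else [::].

Definition centered (N : nat) : seq int :=
  if odd N then zrange (- ((N.-1)./2)%:Z) ((N.-1)./2)%:Z
  else zrange (- (N./2)%:Z + 1) (N./2)%:Z.

Definition centered2 (m M : nat) : seq int :=
  if odd m then centered M
  else if odd M then zrange (1 - ((M.-1)./2)%:Z) (1 + ((M.-1)./2)%:Z)
  else zrange (- (M./2)%:Z + 1) (M./2)%:Z.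

Definition rowcount (J : {fset (int * int)}) (q : int) : nat :=
  (#|` [fset j in J | j.2 == q]|)%fset.
Definition colcount (J : {fset (int * int)}) (p : int) : nat :=
  (#|` [fset j in J | j.1 == p]|)%fset.

Definition step1 (J : {fset (int * int)}) : {fset (int * int)} :=
  ([fset x in flatten [seq [seq (k, j.2) | k <- centered (rowcount J j.2)]
                      | j <- J] ])%fset.

Definition step2 (m : nat) (J : {fset (int * int)}) : {fset (int * int)} :=
  ([fset x in flatten [seq [seq (j.1, k) | k <- centered2 m (colcount J j.1)]
                      | j <- J] ])%fset.

(* index set of the rearrangement R(E_J) with respect to a quasi-rectangle
   whose rectangle has vertical side eps * m *)
Definition rearr (m : nat) (J : {fset (int * int)}) : {fset (int * int)} :=
  step2 m (step1 J).

(* Quasi-rectangle with pseudo-axial symmetry, #J = n m + r, r < n,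
   R of sides eps n (horizontal) x eps m (vertical) centered as prescribed,
   Q the row of r cells centered as prescribed, lying on top of R. *)
Definition qrR (n m : nat) : {fset (int * int)} :=
  ([fset x in [seq (p, q) | p <- centered n, q <- centered m]])%fset.

(* row index of the row of cells just above R: the cells of Q have
   vertical extent [L, L + eps] with L the top edge of R *)
Definition toprow (m : nat) : int := (m./2)%:Z + 1.

Definition qrQ (m r : nat) : {fset (int * int)} :=
  ([fset x in [seq (p, toprow m) | p <- centered r]])%fset.

Definition qr (n m r : nat) : {fset (int * int)} := (qrR n m `|` qrQ m r)%fset.

(* Let S index the quasi-rectangle and d = d^eps_oo(., \partial S).  The
   integrand of D_eps is constant on every cell, so D_eps(E_K, QR) is eps^2
   times the sum of d over the symmetric difference K (+) S, that is
   eps^2 (sum_(k in K) phi k + sum_(k in S) d k) with phi = -d on S and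
   phi = d off S.  Each step of the rearrangement replaces a row (resp. a
   column) of K by a centred segment of the same length, so it is enough that
   phi increases along every row and every column in the zigzag order
   0, 1, -1, 2, -2, ... (reflected about 1/2 for the columns when m is even).
   Each of these inequalities compares phi at a point and at its mirror image
   across a symmetry axis of S, and follows from a two-point argument: the
   mirror is an isometry of the lattice, two points on the same side of the
   axis are closer than one of them and the mirror image of the other, and
   the part of S beyond the axis is mirrored into S. *)

From HB Require Import structures.
From mathcomp Require Import all_boot all_order all_algebra.
From mathcomp Require Import finmap.
From mathcomp Require Import all_classical all_reals all_analysis.
From mathcomp Require Import lra ring zify.

Set Implicit Arguments.
Unset Strict Implicit.
Unset Printing Implicit Defensive.
Import Order.TTheory GRing.Theory Num.Theory.
Import numFieldNormedType.Exports.
Local Open Scope classical_set_scope.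
Local Open Scope ring_scope.

(** * Lattice distances *)

Definition ldist (x y : int * int) : int := Num.max `|x.1 - y.1| `|x.2 - y.2|.

Definition sdist (R : realType) (eps : R) (S : {fset (int * int)}) k :=
  if k \in S then - dlat eps S k else dlat eps S k.

Lemma intr_max (R : realDomainType) (a b : int) :
  (Num.max a b)%:~R = Num.max (a%:~R : R) b%:~R.
Proof. by rewrite /Num.max /Order.max ltr_int; case: ifP. Qed.

Lemma inf_ge0 (R : realType) (A : set R) : (forall a, A a -> 0 <= a) -> 0 <= inf A.
Proof.
move=> A_ge0; have [[a Aa]|A0] := pselect (A !=set0).
  by apply: lb_le_inf => [|b /A_ge0]; first exists a.
by rewrite (_ : A = set0) ?inf0 //; apply/seteqP; split=> // a Aa; apply: A0; exists a.
Qed.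

Lemma le_inf_image (R : realType) (T : Type) (P : set T) (u v : T -> R) :
  (forall j, 0 <= u j) -> (forall j, P j -> exists2 j', P j' & u j' <= v j) ->
  inf [set u j | j in P] <= inf [set v j | j in P].
Proof.
move=> u_ge0 uv; have [[j0 Pj0]|P0] := pselect (P !=set0); last first.
  rewrite (_ : P = set0) ?image_set0 //.
  by apply/seteqP; split=> // j Pj; apply: P0; exists j.
apply: lb_le_inf; first by exists (v j0), j0.
move=> _ [j Pj <-]; have [j' Pj' le_uv] := uv j Pj.
apply: le_trans le_uv; apply: ge_inf; last by exists j'.
by exists 0 => _ [k _ <-].
Qed.

Lemma inf_image_eq0 (R : realType) (T : Type) (P : set T) (u : T -> R) x :
  (forall j, 0 <= u j) -> P x -> u x = 0 -> inf [set u j | j in P] = 0.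
Proof.
move=> u_ge0 Px ux0; apply/le_anti/andP; split; last by apply: inf_ge0 => _ [k _ <-].
by rewrite -ux0; apply: ge_inf; [exists 0 => _ [k _ <-] | exists x].
Qed.

Section LatticeDistance.
Variables (R : realType) (eps : R).
Hypothesis eps_gt0 : 0 < eps.

Lemma normInf_ge0 (x y : R * R) : 0 <= normInf x y.
Proof. by rewrite /normInf le_max normr_ge0. Qed.

Lemma normInf_lpt x y : normInf (lpt eps x) (lpt eps y) = eps * (ldist x y)%:~R.
Proof.
rewrite /normInf /lpt /= -!mulrBr !normrM (gtr0_norm eps_gt0) -maxr_pMr ?ltW //.
by rewrite /ldist intr_max !intr_norm !intrB.
Qed.

Lemma distJ_ge0 S i : 0 <= distJ eps i S.
Proof. by apply: inf_ge0 => _ [j _ <-]; exact: normInf_ge0. Qed.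

Lemma distCJ_ge0 S i : 0 <= distCJ eps i S.
Proof. by apply: inf_ge0 => _ [j _ <-]; exact: normInf_ge0. Qed.

Lemma dlat_ge0 S i : 0 <= dlat eps S i.
Proof. by rewrite addr_ge0 ?distJ_ge0 ?distCJ_ge0. Qed.

Lemma normInfxx (x : R * R) : normInf x x = 0.
Proof. by rewrite /normInf !subrr normr0 maxxx. Qed.

Lemma distJ_in S i : i \in S -> distJ eps i S = 0.
Proof.
by move=> iS; apply: (inf_image_eq0 (x := i)) => // [j|]; rewrite ?normInf_ge0 ?normInfxx.
Qed.

Lemma distCJ_notin S i : i \notin S -> distCJ eps i S = 0.
Proof.
by move=> iS; apply: (inf_image_eq0 (x := i)) => // [j|]; rewrite ?normInf_ge0 ?normInfxx.
Qed.

End LatticeDistance.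

(** * The integral as a lattice sum *)

(* The closed cell of [j] meets only these four of the half-open boxes below. *)
Definition shifts (j : int * int) : seq (int * int) :=
  [:: j; (j.1 + 1, j.2); (j.1, j.2 + 1); (j.1 + 1, j.2 + 1)].

Definition around (U : {fset (int * int)}) : {fset (int * int)} :=
  [fset x in flatten (map shifts U)]%fset.

Lemma mem_around U j x : j \in U -> x \in shifts j -> x \in around U.
Proof. by move=> jU xj; rewrite inE; apply/flatten_mapP; exists j. Qed.

Lemma sub_around U : (U `<=` around U)%fset.
Proof. by apply/fsubsetP => j jU; apply: mem_around jU _; rewrite inE eqxx. Qed.

Lemma sum_symdiff (T : choiceType) (V : zmodType) (U K S : {fset T}) (w : T -> V) :
  (K `<=` U)%fset -> (S `<=` U)%fset ->
  \sum_(k <- U) (if (k \in K) != (k \in S) then w k else 0) =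
  \sum_(k <- K) (if k \in S then - w k else w k) + \sum_(k <- S) w k.
Proof.
move=> KU SU.
have extend (A : {fset T}) (F : T -> V) : (A `<=` U)%fset ->
    \sum_(k <- A) F k = \sum_(k <- U) (if k \in A then F k else 0).
  move=> AU; transitivity (\sum_(k <- A) (if k \in A then F k else 0)).
    by apply: eq_big_seq => k ->.
  by apply: big_fset_incl => // k _ /negbTE ->.
rewrite (extend K) // (extend S) // -big_split /=; apply: eq_bigr => k _.
by case: (k \in K); case: (k \in S); rewrite /= ?addNr ?addr0 ?add0r.
Qed.

Section CellDecomposition.
Variables (R : realType) (eps : R).
Hypothesis eps_gt0 : 0 < eps.
Local Notation MR := (measurableTypeR R).

Definition lo (z : int) : R := eps * (z%:~R - 2^-1).
Definition hi (z : int) : R := eps * (z%:~R + 2^-1).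

Lemma lo_lt_hi z : lo z < hi z.
Proof. by rewrite /lo /hi ltr_pM2l //; lra. Qed.

Lemma hiBlo z : hi z - lo z = eps.
Proof. by rewrite /hi /lo; field. Qed.

Lemma lo_lt_hi_le a b : lo a < hi b -> a <= b.
Proof.
rewrite /lo /hi ltr_pM2l // => lt_ab.
have : (a%:~R : R) < (b + 1)%:~R by rewrite intrD; lra.
by rewrite ltr_int; lia.
Qed.

Lemma lo_le_hi_le a b : lo a <= hi b -> a <= b + 1.
Proof.
rewrite /lo /hi ler_pM2l // => le_ab.
have : (a%:~R : R) <= (b + 1)%:~R by rewrite intrD; lra.
by rewrite ler_int.
Qed.

(* The half-open boxes partition the plane ([cellidx x] indexes the box of [x]);
   on an open cell, membership in every [EJ] is decided, and a box differs from
   its open cell by a null set. *)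
Definition box (k : int * int) : set (R * R) :=
  [set` `[lo k.1, hi k.1[] `*` [set` `[lo k.2, hi k.2[].

Definition ocell (k : int * int) : set (R * R) :=
  [set` `]lo k.1, hi k.1[] `*` [set` `]lo k.2, hi k.2[].

Lemma cellP k x :
  cell eps k x <-> (lo k.1 <= x.1 <= hi k.1) /\ (lo k.2 <= x.2 <= hi k.2).
Proof.
have loE z : eps * z%:~R - eps / 2 = lo z by rewrite /lo; ring.
have hiE z : eps * z%:~R + eps / 2 = hi z by rewrite /hi; ring.
by rewrite /cell /lpt /= !ler_distl !loE !hiE.
Qed.

Lemma boxP k x : box k x <-> (lo k.1 <= x.1 < hi k.1) /\ (lo k.2 <= x.2 < hi k.2).
Proof. by rewrite /box /= !in_itv. Qed.

Lemma ocellP k x : ocell k x <-> (lo k.1 < x.1 < hi k.1) /\ (lo k.2 < x.2 < hi k.2).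
Proof. by rewrite /ocell /= !in_itv. Qed.

Lemma floor_cellP (z : int) (t : R) :
  Num.floor (t / eps + 2^-1) = z <-> lo z <= t < hi z.
Proof.
have tE : t = eps * (t / eps) by rewrite mulrC divfK // gt_eqF.
rewrite [in X in _ <-> X]tE /lo /hi ler_pM2l // ltr_pM2l //; split => [<-|/andP[]].
  by have /andP[] := floor_itv (t / eps + 2^-1); rewrite intrD => *; apply/andP; split; lra.
by move=> *; apply: floor_def; rewrite intrD; apply/andP; split; lra.
Qed.

Lemma cellidxP k x : cellidx eps x = k <-> box k x.
Proof.
rewrite boxP /cellidx; case: k => a b /=.
by split => [[<- <-]|[/floor_cellP -> /floor_cellP ->]]; split; apply/floor_cellP.
Qed.

Lemma ocell_sub_box k : ocell k `<=` box k.
Proof.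
by move=> x /ocellP[/andP[a1 a2] /andP[b1 b2]]; apply/boxP; rewrite (ltW a1) (ltW b1) a2 b2.
Qed.

Lemma box_sub_cell k : box k `<=` cell eps k.
Proof.
by move=> x /boxP[/andP[a1 a2] /andP[b1 b2]]; apply/cellP; rewrite a1 b1 (ltW a2) (ltW b2).
Qed.

Lemma ocell_cell k j x : ocell k x -> cell eps j x -> j = k.
Proof.
case: k j => [k1 k2] [j1 j2] /ocellP[/andP[a1 a2] /andP[b1 b2]].
move=> /cellP[/andP[c1 c2] /andP[d1 d2]].
have := lo_lt_hi_le (le_lt_trans c1 a2); have := lo_lt_hi_le (lt_le_trans a1 c2).
have := lo_lt_hi_le (le_lt_trans d1 b2); have := lo_lt_hi_le (lt_le_trans b1 d2).
by rewrite /= => *; congr pair; lia.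
Qed.

Lemma cellidx_shifts j x : cell eps j x -> cellidx eps x \in shifts j.
Proof.
case: j => j1 j2; case E: (cellidx eps x) => [u v].
move/cellidxP: E => /boxP[/andP[a1 a2] /andP[b1 b2]] /cellP[/andP[c1 c2] /andP[d1 d2]].
have := lo_lt_hi_le (le_lt_trans c1 a2); have := lo_le_hi_le (le_trans a1 c2).
have := lo_lt_hi_le (le_lt_trans d1 b2); have := lo_le_hi_le (le_trans b1 d2).
by rewrite /shifts !inE /= !xpair_eqE => *; lia.
Qed.

Lemma measurable_box k : measurable (box k : set (MR * MR)).
Proof. by apply: measurableX; exact: measurable_itv. Qed.

Lemma measurable_ocell k : measurable (ocell k : set (MR * MR)).
Proof. by apply: measurableX; exact: measurable_itv. Qed.

Lemma measurable_cell k : measurable (cell eps k : set (MR * MR)).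
Proof.
rewrite (_ : cell eps k = [set` `[lo k.1, hi k.1]] `*` [set` `[lo k.2, hi k.2]]).
  by apply: measurableX; exact: measurable_itv.
by apply/seteqP; split => x; rewrite /= !in_itv /= => /cellP.
Qed.

Lemma measurable_EJ (K : {fset (int * int)}) : measurable (EJ eps K : set (MR * MR)).
Proof.
by apply: fin_bigcup_measurable; [exact: finite_fset | move=> k _; exact: measurable_cell].
Qed.

Definition symd (K S : {fset (int * int)}) : set (R * R) :=
  (EJ eps K `\` EJ eps S) `|` (EJ eps S `\` EJ eps K).

Lemma measurable_symd K S : measurable (symd K S : set (MR * MR)).
Proof. by apply: measurableU; apply: measurableD; exact: measurable_EJ. Qed.

Lemma EJ_ocell K k x : ocell k x -> EJ eps K x = (k \in K).
Proof.
move=> ox; apply/propext; split => [[j jK /(ocell_cell ox) <-] //|kK].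
by exists k => //; apply/box_sub_cell/ocell_sub_box.
Qed.

Lemma symd_ocell K S k x : ocell k x -> symd K S x = ((k \in K) != (k \in S)).
Proof.
move=> ox; rewrite /symd /setU /setD /= !(EJ_ocell _ ox).
by apply/propext; case: (k \in K); case: (k \in S) => /=; intuition congruence.
Qed.

Lemma leb2_itv (a b c d : R) (ia ib ic id : bool) :
  @leb2 R ([set` Interval (BSide ia a) (BSide ib b)] `*`
           [set` Interval (BSide ic c) (BSide id d)]) =
  (lebesgue_measure [set` Interval (BSide ia a) (BSide ib b)] *
   lebesgue_measure [set` Interval (BSide ic c) (BSide id d)])%E.
Proof. by rewrite /leb2 product_measure1E //; exact: measurable_itv. Qed.

Lemma leb2_box k : @leb2 R (box k) = (eps * eps)%:E.
Proof.
by rewrite /box leb2_itv !lebesgue_measure_itv /= !lte_fin !lo_lt_hi -!EFinB !hiBlo.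
Qed.

Lemma leb2_ocell k : @leb2 R (ocell k) = (eps * eps)%:E.
Proof.
by rewrite /ocell leb2_itv !lebesgue_measure_itv /= !lte_fin !lo_lt_hi -!EFinB !hiBlo.
Qed.

Lemma leb2_box_boundary k : @leb2 R (box k `\` ocell k) = 0%E.
Proof.
have -> : @leb2 R (box k `\` ocell k) = (@leb2 R (box k) - @leb2 R (box k `&` ocell k))%E.
  apply: measureD; [exact: measurable_box | exact: measurable_ocell |].
  by have : (@leb2 R (box k) < +oo)%E by rewrite leb2_box ltry.
by rewrite (setIidr (@ocell_sub_box k)) leb2_box leb2_ocell subee.
Qed.

Lemma leb2_symd_box K S k : @leb2 R (symd K S `&` box k) =
  if (k \in K) != (k \in S) then (eps * eps)%:E else 0%E.
Proof.
have m_symd_box : measurable (symd K S `&` box k : set (MR * MR)).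
  exact: measurableI (measurable_symd K S) (measurable_box k).
apply/le_anti/andP; case: ifP => KS; split.
- by rewrite -(leb2_box k) le_measure ?inE //; exact: measurable_box.
- rewrite -(leb2_ocell k) le_measure ?inE //; first exact: measurable_ocell.
  by move=> x ox; split; [rewrite (symd_ocell _ _ ox) | exact: ocell_sub_box].
- rewrite -(leb2_box_boundary k) le_measure ?inE //.
    by apply: measurableD; [exact: measurable_box | exact: measurable_ocell].
  by move=> x [Dx bx]; split => // ox; move: Dx; rewrite (symd_ocell _ _ ox) KS.
- exact: measure_ge0.
Qed.

Lemma dext_patch_sum K S x :
  ((fun y => (dext eps S y)%:E) \_ (symd K S)) x =
  (\sum_(k <- around (K `|` S)%fset) (dlat eps S k)%:E * (\1_(symd K S `&` box k) x)%:E)%E.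
Proof.
rewrite patchE; have [xD|xND] := boolP (x \in symd K S); last first.
  rewrite big1 // => k _; rewrite indicE memNset ?mule0 //.
  by move=> -[/mem_set Dx _]; rewrite Dx in xND.
have x_around : cellidx eps x \in around (K `|` S)%fset.
  case: (set_mem xD) => -[[j jKS cj] _]; apply: mem_around (cellidx_shifts cj).
    by rewrite in_fsetU jKS.
  by rewrite in_fsetU jKS orbT.
rewrite (bigD1_seq _ x_around) ?fset_uniq //= indicE mem_set; last first.
  by split; [exact/set_mem | exact/cellidxP].
rewrite /= mulr1n mule1 big1 ?adde0 // => k k_x.
by rewrite indicE memNset ?mule0 // => -[_ /cellidxP xk]; rewrite xk eqxx in k_x.
Qed.

Lemma Deps_sum K S : Deps eps K S =
  ((eps * eps) * \sum_(k <- around (K `|` S)%fset)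
      (if (k \in K) != (k \in S) then dlat eps S k else 0))%:E.
Proof.
have m_symd_box k : measurable (symd K S `&` box k : set (MR * MR)).
  exact: measurableI (measurable_symd K S) (measurable_box k).
rewrite /Deps integral_mkcond (funext (dext_patch_sum K S)) ge0_integral_sum //; last 2 first.
- move=> k; apply/measurable_funeM/measurable_realfun.measurable_EFinP.
  exact: measurable_realfun.measurable_indic.
- by move=> k x _; rewrite mule_ge0 // lee_fin ?dlat_ge0.
under eq_bigr => k _.
  rewrite ge0_integralZl ?lee_fin ?dlat_ge0 //; last first.
    apply/measurable_realfun.measurable_EFinP; exact: measurable_realfun.measurable_indic.
  rewrite integral_indic // setIT.
  over.
rewrite mulr_sumr -sumEFin; apply: eq_bigr => k _.
rewrite [X in (_ * X)%E](_ : _ = @leb2 R (symd K S `&` box k)) // leb2_symd_box.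
by case: ifP => _; rewrite ?mule0 ?mulr0 // -EFinM mulrC.
Qed.

End CellDecomposition.

Lemma Deps_sdist (R : realType) (eps : R) (K S : {fset (int * int)}) : 0 < eps ->
  Deps eps K S =
  (eps * eps * (\sum_(k <- K) sdist eps S k + \sum_(k <- S) dlat eps S k))%:E.
Proof.
move=> eps_gt0; have KU := fsubset_trans (fsubsetUl K S) (sub_around _).
have SU := fsubset_trans (fsubsetUr K S) (sub_around _).
by rewrite (Deps_sum eps_gt0) (sum_symdiff (dlat eps S) KU SU).
Qed.

(** * Two-point rearrangement *)

Definition half_reflection (tau : int * int -> int * int) (h : pred (int * int)) :=
  [/\ involutive tau,
      forall x y, ldist (tau x) (tau y) = ldist x y,
      forall x y, h x -> h y -> ldist x y <= ldist (tau x) y,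
      forall x, ~~ h x -> h (tau x) &
      forall x, h x -> h (tau x) -> tau x = x].

Section TwoPoint.
Variables (R : realType) (eps : R) (S : {fset (int * int)}).
Hypothesis eps_gt0 : 0 < eps.
Variables (tau : int * int -> int * int) (h : pred (int * int)).
Hypothesis tau_h : half_reflection tau h.
Hypothesis S_fold : forall y, y \in S -> ~~ h y -> tau y \in S.

Lemma mirror_in_S x : h x -> (tau x \in S) -> x \in S.
Proof.
case: tau_h => tauK _ _ _ fix_tau hx txS.
have [htx|/S_fold] := boolP (h (tau x)); first by rewrite -(fix_tau x).
by rewrite tauK; apply.
Qed.

Lemma distJ_mirror x : h x -> distJ eps x S <= distJ eps (tau x) S.
Proof.
case: tau_h => tauK iso near _ _ hx.
apply: le_inf_image => [j|j /= jS]; first exact: normInf_ge0.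
have [hj|nhj] := boolP (h j).
  by exists j => //; rewrite !(normInf_lpt eps_gt0) (ler_pM2l eps_gt0) ler_int near.
by exists (tau j); [exact: S_fold | rewrite !(normInf_lpt eps_gt0) -{2}(tauK j) iso].
Qed.

Lemma distCJ_mirror x : h x -> distCJ eps (tau x) S <= distCJ eps x S.
Proof.
case: tau_h => tauK iso near cross _ hx.
apply: le_inf_image => [j|j /= jS]; first exact: normInf_ge0.
have [hj|nhj] := boolP (h j).
  exists (tau j); last by rewrite !(normInf_lpt eps_gt0) iso.
  by apply: contra jS; exact: mirror_in_S.
exists j => //; rewrite !(normInf_lpt eps_gt0) (ler_pM2l eps_gt0) ler_int.
by rewrite -{1}(tauK j) iso -[leRHS](iso x j) near ?cross.
Qed.

Lemma sdist_mirror x : h x -> sdist eps S x <= sdist eps S (tau x).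
Proof.
move=> hx; rewrite /sdist /dlat.
have [xS|xNS] := boolP (x \in S).
  have [txS|txNS] := boolP (tau x \in S).
    by rewrite !distJ_in // !add0r lerN2 distCJ_mirror.
  by rewrite (le_trans _ (dlat_ge0 _ _ _)) // oppr_le0 dlat_ge0.
have txNS : tau x \notin S by apply: contra xNS; exact: mirror_in_S.
by rewrite (negbTE txNS) !distCJ_notin // !addr0 distJ_mirror.
Qed.

End TwoPoint.

Definition mirror1 (c : int) (k : int * int) : int * int := (c - k.1, k.2).
Definition mirror2 (c : int) (k : int * int) : int * int := (k.1, c - k.2).

Local Ltac solve_half_reflection :=
  split=> [[? ?]|[? ?] [? ?]|[? ?] [? ?]|[? ?]|[? ?]];
  rewrite /mirror1 /mirror2 /ldist /= => *; try congr pair; lia.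

Lemma mirror1_lower c : half_reflection (mirror1 c) (fun k => 2 * k.1 <= c).
Proof. solve_half_reflection. Qed.

Lemma mirror1_upper c : half_reflection (mirror1 c) (fun k => c <= 2 * k.1).
Proof. solve_half_reflection. Qed.

Lemma mirror2_lower c : half_reflection (mirror2 c) (fun k => 2 * k.2 <= c).
Proof. solve_half_reflection. Qed.

Lemma mirror2_upper c : half_reflection (mirror2 c) (fun k => c <= 2 * k.2).
Proof. solve_half_reflection. Qed.

(** * Sums over centred segments *)

Definition zigzag (i : nat) : int := if odd i then (i./2).+1%:Z else - (i./2)%:Z.

Definition zigzag_rank (x : int) : nat := (absz (2 * x)%R - (0 < x)%R)%N.

Lemma zigzagK : cancel zigzag zigzag_rank.
Proof. by move=> i; rewrite /zigzag /zigzag_rank; case: ifP; lia. Qed.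

Lemma zigzag_rankK : cancel zigzag_rank zigzag.
Proof. by move=> x; rewrite /zigzag /zigzag_rank; case: ifP; lia. Qed.

Lemma zigzag_ind (P : int -> int -> Prop) :
  (forall a : nat, P (- a%:Z) a.+1%:Z) -> (forall a : nat, P a.+1%:Z (- a.+1%:Z)) ->
  forall i, P (zigzag i) (zigzag i.+1).
Proof.
move=> Peven Podd i; rewrite /zigzag /= uphalf_half.
by case: (odd i); rewrite /= ?add0n ?add1n.
Qed.

Lemma mem_zrange (a b x : int) : (x \in zrange a b) = (a <= x <= b).
Proof.
rewrite /zrange; case: ifP => ab; last by apply/esym/negbTE; lia.
rewrite /mkseq; apply/mapP/idP => [[i]|xab]; first by rewrite mem_iota; lia.
by exists (absz (x - a)); rewrite ?mem_iota; lia.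
Qed.

Lemma uniq_zrange a b : uniq (zrange a b).
Proof.
rewrite /zrange; case: ifP => // _.
by rewrite /mkseq map_inj_uniq ?iota_uniq // => i j /addrI [].
Qed.

Lemma mem_centered N x : (x \in centered N) = (- N%:Z < 2 * x <= N).
Proof. by rewrite /centered; case: ifP => N_odd; rewrite mem_zrange; lia. Qed.

Lemma uniq_centered N : uniq (centered N).
Proof. by rewrite /centered; case: ifP => _; exact: uniq_zrange. Qed.

Lemma centered_zigzag N : perm_eq (centered N) (map zigzag (iota 0 N)).
Proof.
apply: uniq_perm; rewrite ?uniq_centered ?(map_inj_uniq (can_inj zigzagK)) ?iota_uniq //.
move=> x; rewrite -[in RHS](zigzag_rankK x) (mem_map (can_inj zigzagK)).
by rewrite mem_centered mem_iota /zigzag_rank; lia.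
Qed.

Lemma centered2_odd m M : odd m -> centered2 m M = centered M.
Proof. by rewrite /centered2 => ->. Qed.

Lemma centered2_even m M : ~~ odd m ->
  perm_eq (centered2 m M) (map (fun x => 1 - x) (centered M)).
Proof.
rewrite /centered2 => /negbTE ->.
apply: uniq_perm; rewrite ?(map_inj_uniq (can_inj (subKr 1))) ?uniq_centered //.
  by case: ifP => _; exact: uniq_zrange.
move=> x; apply/idP/mapP => [x_in|[y y_in ->]].
  exists (1 - x); rewrite ?subKr // mem_centered.
  by move: x_in; case: ifP; rewrite mem_zrange; lia.
by move: y_in; rewrite mem_centered; case: ifP; rewrite mem_zrange; lia.
Qed.

Lemma uniq_centered2 m M : uniq (centered2 m M).
Proof.
rewrite /centered2; case: ifP => _; first exact: uniq_centered.
by case: ifP => _; exact: uniq_zrange.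
Qed.

Section CenteredSums.
Variable R : numDomainType.

Lemma sum_iota_le (g : nat -> R) : {homo g : i j / (i <= j)%N >-> i <= j} ->
  forall N (t : seq nat), uniq t -> size t = N ->
  \sum_(i <- iota 0 N) g i <= \sum_(i <- t) g i.
Proof.
move=> g_homo; elim=> [|N IHN] t t_uniq t_size.
  by rewrite (size0nil t_size) !big_nil.
have /hasP[x xt Nx] : has (leq N) t.
  apply/negPn/negP => /hasPn t_small.
  have : (size t <= size (iota 0 N))%N.
    by apply: uniq_leq_size => // y /t_small; rewrite mem_iota; lia.
  by rewrite size_iota t_size ltnn.
rewrite (perm_big _ (perm_to_rem xt)) big_cons -addn1 iotaD big_cat /= big_seq1 addrC.
apply: lerD; first exact: g_homo.
by apply: IHN; rewrite ?rem_uniq ?size_rem // t_size.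
Qed.

Lemma sum_centered_le (f : int -> R) :
  (forall i, f (zigzag i) <= f (zigzag i.+1)) ->
  forall s : seq int, uniq s -> \sum_(x <- centered (size s)) f x <= \sum_(x <- s) f x.
Proof.
move=> f_step s s_uniq.
rewrite (perm_big _ (centered_zigzag _)) big_map.
rewrite -[s in leRHS](mapK zigzag_rankK) big_map /=.
apply: (sum_iota_le (g := f \o zigzag)); rewrite ?size_map //.
  by apply: homo_leq; [exact: lexx | exact: le_trans | exact: f_step].
by rewrite (map_inj_uniq (can_inj zigzag_rankK)).
Qed.

End CenteredSums.

(** * Rearranging along lines *)

Definition line_rearr (C : nat -> seq int) (line : int * int -> int)
    (mk : int -> int -> int * int) (J : {fset (int * int)}) : {fset (int * int)} :=
  [fset x in flatten [seq [seq mk p (line j) |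
       p <- C #|` [fset j' in J | line j' == line j]|] | j <- J]]%fset.

Lemma step1E J : step1 J = line_rearr centered snd pair J.
Proof. by []. Qed.

Lemma step2E m J : step2 m J = line_rearr (centered2 m) fst (fun p q => (q, p)) J.
Proof. by []. Qed.

Lemma card_fset_filter (T : choiceType) (J : {fset T}) (P : pred T) :
  #|` [fset j in J | P j]|%fset = size [seq j <- J | P j].
Proof.
have -> : [fset j in J | P j]%fset = [fset j in [seq j <- J | P j]]%fset.
  by apply/fsetP => x; rewrite !inE mem_filter andbC.
by rewrite card_fseq undup_id // filter_uniq // fset_uniq.
Qed.

Lemma sum_by_line (T I : eqType) (R : nmodType) (line : T -> I) (F : T -> R)
    (Q : seq I) (X : seq T) :
  uniq Q -> {subset map line X <= Q} ->
  \sum_(x <- X) F x = \sum_(q <- Q) \sum_(x <- X | line x == q) F x.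
Proof.
move=> Q_uniq XQ; under [RHS]eq_bigr => q _ do rewrite big_mkcond.
rewrite exchange_big /=; apply: eq_big_seq => x xX.
rewrite (bigD1_seq (line x)) ?XQ ?map_f //= eqxx big1 ?addr0 // => q qx.
by rewrite eq_sym (negbTE qx).
Qed.

Section LineRearrangement.
Variables (R : numDomainType) (C : nat -> seq int).
Variables (line pos : int * int -> int) (mk : int -> int -> int * int).
Hypothesis mkK : forall x, mk (pos x) (line x) = x.
Hypothesis line_mk : forall p q, line (mk p q) = q.
Hypothesis pos_mk : forall p q, pos (mk p q) = p.
Hypothesis C_uniq : forall N, uniq (C N).

Let count_line (J : {fset (int * int)}) q := #|` [fset j in J | line j == q]|%fset.

Lemma mem_line_rearr J x : (x \in line_rearr C line mk J) =
  (line x \in map line J) && (pos x \in C (count_line J (line x))).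
Proof.
rewrite inE; apply/flattenP/andP.
  by case=> _ /mapP[j jJ ->] /mapP[p pC ->]; rewrite line_mk pos_mk map_f.
case=> /mapP[j jJ line_x] px; exists [seq mk p (line j) | p <- C (count_line J (line j))].
  exact: map_f.
by apply/mapP; exists (pos x); rewrite -?line_x ?mkK.
Qed.

Lemma sum_on_line_rearr (F : int * int -> R) (J : {fset (int * int)}) q : q \in map line J ->
  \sum_(x <- line_rearr C line mk J | line x == q) F x =
  \sum_(p <- C (count_line J q)) F (mk p q).
Proof.
move=> qJ; rewrite -big_filter -(big_map (mk^~ q) predT F); apply/perm_big/uniq_perm.
- by rewrite filter_uniq ?fset_uniq.
- by rewrite (map_inj_uniq (can_inj (pos_mk^~ q))).
move=> x; rewrite mem_filter mem_line_rearr; apply/idP/mapP.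
  by case/andP=> /eqP <- /andP[_ px]; exists (pos x); rewrite ?mkK.
by case=> p pC ->; rewrite line_mk pos_mk eqxx qJ.
Qed.

Lemma sum_on_line (F : int * int -> R) (J : seq (int * int)) q :
  \sum_(x <- J | line x == q) F x = \sum_(p <- map pos [seq x <- J | line x == q]) F (mk p q).
Proof.
rewrite -[LHS]big_filter big_map; apply: eq_big_seq => x.
by rewrite mem_filter => /andP[/eqP <- _]; rewrite mkK.
Qed.

Lemma uniq_pos_on_line (J : seq (int * int)) q :
  uniq J -> uniq (map pos [seq x <- J | line x == q]).
Proof.
move=> J_uniq; rewrite map_inj_in_uniq ?filter_uniq // => x y.
rewrite !mem_filter => /andP[/eqP lx _] /andP[/eqP ly _] pxy.
by rewrite -(mkK x) -(mkK y) pxy lx ly.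
Qed.

Lemma line_rearr_sum_le (F : int * int -> R) :
  (forall q s, uniq s -> \sum_(p <- C (size s)) F (mk p q) <= \sum_(p <- s) F (mk p q)) ->
  forall J, \sum_(x <- line_rearr C line mk J) F x <= \sum_(x <- J) F x.
Proof.
move=> C_best J; have Q_uniq := undup_uniq (map line J).
rewrite (sum_by_line (line := line) F Q_uniq (X := line_rearr C line mk J)); last first.
  by move=> _ /mapP[x /[!mem_line_rearr] /andP[xJ _] ->]; rewrite mem_undup.
rewrite (sum_by_line (line := line) F Q_uniq (X := J)); last by move=> q; rewrite mem_undup.
rewrite big_seq [leRHS]big_seq; apply: ler_sum => q; rewrite mem_undup => qJ.
rewrite sum_on_line_rearr // sum_on_line /count_line card_fset_filter -(size_map pos).
by apply/C_best/uniq_pos_on_line; exact: fset_uniq.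
Qed.

End LineRearrangement.

(** * The quasi-rectangle *)

Lemma mem_qr n m r k : (k \in qr n m r) =
  (k.1 \in centered n) && (k.2 \in centered m) ||
  (k.1 \in centered r) && (k.2 == toprow m).
Proof.
rewrite /qr /qrR /qrQ !inE; congr orb.
  apply/allpairsP/andP => [[[p q] /= [pn qm ->]] //|[pn qm]].
  by exists (k.1, k.2); case: k pn qm.
apply/mapP/andP => [[p pr ->] //|[pr /eqP q]].
by exists k.1; rewrite // -q; case: k {pr q}.
Qed.

Section QuasiRectangle.
Variables (R : realType) (eps : R) (n m r : nat).
Hypotheses (eps_gt0 : 0 < eps) (m_le_n : (m <= n)%N) (r_lt_n : (r < n)%N).
Local Notation S := (qr n m r).

Let mirror_le tau h x y : half_reflection tau h ->
  (forall k, k \in S -> ~~ h k -> tau k \in S) -> h x -> tau x = y ->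
  sdist eps S x <= sdist eps S y.
Proof. by move=> tau_h S_fold hx <-; exact: (sdist_mirror eps_gt0 tau_h S_fold hx). Qed.

Local Ltac solve_mirror :=
  try move=> k; rewrite /mirror1 /mirror2 /= ?mem_qr ?mem_centered /toprow /=;
  try congr pair; lia.

Lemma sdist_row_zigzag q i :
  sdist eps S (zigzag i, q) <= sdist eps S (zigzag i.+1, q).
Proof.
apply: (zigzag_ind (P := fun x y => sdist eps S (x, q) <= sdist eps S (y, q))) => a.
  by apply: (mirror_le (mirror1_lower 1)); solve_mirror.
by apply: (mirror_le (mirror1_upper 0)); solve_mirror.
Qed.

Lemma sdist_col_zigzag_odd p i : odd m ->
  sdist eps S (p, zigzag i) <= sdist eps S (p, zigzag i.+1).
Proof.
move=> m_odd.
apply: (zigzag_ind (P := fun x y => sdist eps S (p, x) <= sdist eps S (p, y))) => a.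
  by apply: (mirror_le (mirror2_lower 1)); solve_mirror.
by apply: (mirror_le (mirror2_upper 0)); solve_mirror.
Qed.

Lemma sdist_col_zigzag_even p i : ~~ odd m ->
  sdist eps S (p, 1 - zigzag i) <= sdist eps S (p, 1 - zigzag i.+1).
Proof.
move=> m_even.
apply: (zigzag_ind (P := fun x y => sdist eps S (p, 1 - x) <= sdist eps S (p, 1 - y))) => a.
  by apply: (mirror_le (mirror2_upper 1)); solve_mirror.
by apply: (mirror_le (mirror2_lower 2)); solve_mirror.
Qed.

Lemma sum_row_le q s : uniq s ->
  \sum_(p <- centered (size s)) sdist eps S (p, q) <= \sum_(p <- s) sdist eps S (p, q).
Proof. by move=> s_uniq; apply: sum_centered_le s_uniq => i; exact: sdist_row_zigzag. Qed.

Lemma sum_col_le p s : uniq s ->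
  \sum_(q <- centered2 m (size s)) sdist eps S (p, q) <= \sum_(q <- s) sdist eps S (p, q).
Proof.
move=> s_uniq; have [m_odd|m_even] := boolP (odd m).
  by rewrite centered2_odd //; apply: sum_centered_le s_uniq => i; exact: sdist_col_zigzag_odd.
rewrite (perm_big _ (centered2_even _ m_even)) big_map -(size_map (fun x => 1 - x) s).
rewrite -[s in leRHS](mapK (subKr 1)) big_map /=.
apply: (sum_centered_le (f := fun x => sdist eps S (p, 1 - x))).
  by move=> i; exact: sdist_col_zigzag_even.
by rewrite (map_inj_uniq (can_inj (subKr 1))).
Qed.

Lemma sum_rearr_le J : \sum_(k <- rearr m J) sdist eps S k <= \sum_(k <- J) sdist eps S k.
Proof.
rewrite /rearr step2E; apply: (le_trans (y := \sum_(k <- step1 J) sdist eps S k)).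
  apply: (line_rearr_sum_le (pos := snd)) => //; first by case.
    exact: uniq_centered2.
  exact: sum_col_le.
rewrite step1E; apply: (line_rearr_sum_le (pos := fst)) => //; first by case.
  exact: uniq_centered.
exact: sum_row_le.
Qed.

End QuasiRectangle.

Theorem proposition3p6 (R : realType) (eps : R) (n m r : nat)
    (J : {fset (int * int)}) :
  (0 < eps)%R -> (0 < m)%N -> (m <= n)%N -> (r < n)%N ->
  (Deps eps (rearr m J) (qr n m r) <= Deps eps J (qr n m r))%E.
Proof.
move=> eps_gt0 _ m_le_n r_lt_n.
rewrite !(Deps_sdist _ _ eps_gt0) lee_fin (ler_pM2l (mulr_gt0 eps_gt0 eps_gt0)) lerD2r.
exact: sum_rearr_le.
Qed.
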